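(* In the private bug bounty model with a single artificial bug described in the context, let $c_a(\overline v)$ be the unique fixed point of $\hat c\mapsto\overline v\,\Phi(\hat c;1)$. Then $c_a(\overline v)$ increases in $\overline v$ and $C(\overline v)=[0,c_a(\overline v)]$, where $$C(\overline v)=\Big\{\hat c:\ \hat c=\Psi(\hat c;\boldsymbol v,v_a,q_a),\ \sum_l v^l+v_a\le\overline v,\ v^l\ge0,\ v_a\ge0,\ q_a\in[0,1]\Big\}.$$
   Context: Private bug bounty model. There are $L$ potential organic bugs; bug $l$ exists with probability $\mu^l\in(0,1]$ and has complexity $q^l\in(0,1]$. There are $n$ agents with private search costs drawn i.i.d. from a distribution $F$ with support $[\underline c,\overline c]$ ($-\infty\le\underline c<\overline c\le\infty$, $\overline c>0$), continuous with full support, finite density $f$ and $F/f$ non-decreasing; $F(\hat c)$ denotes the distribution function. The designer has budget $\overline v>0$, sets prizes $v^l\ge0$ for organic bugs, and inserts one artificial bug (existing with certainty) with prize $v_a\ge0$ and complexity $q_a\in[0,1]$. A searching agent finds each existing bug of complexity $q$ with probability $q$, independently across agents and bugs; the prize of a found bug goes to one of its finders chosen uniformly at random. $\Phi(\hat c;q)$ is the probability that a searching agent wins the prize of an existing bug of complexity $q$ when each of the other $n-1$ agents searches iff his/her cost is at most $\hat c$. $\Psi(\hat c;\boldsymbol v,v_a,q_a)=\sum_l v^l\mu^l\Phi(\hat c;q^l)+v_a\Phi(\hat c;q_a)$. *)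

From Stdlib Require Import Reals Lra Lia.
From Coquelicot Require Import Coquelicot.
Open Scope R_scope.

Fixpoint sumL (L : nat) (g : nat -> R) : R :=
  match L with
  | O => 0
  | S k => sumL k g + g k
  end.

(* Phi n F c q : probability that a searching agent wins the prize of an
   existing bug of complexity q when each of the other n-1 agents searches
   iff cost <= c (i.e. with probability F c).  Each other agent finds the bug
   with probability F c * q independently; given that our agent finds it
   (probability q) and k others find it, he wins with probability 1/(k+1). *)
Definition Phi (n : nat) (F : R -> R) (c q : R) : R :=
  let p := F c * q in
  sum_f_R0 (fun k => Binomial.C (n - 1) k * p ^ k * (1 - p) ^ (n - 1 - k)
                     * (q / INR (k + 1))) (n - 1).

Definition Psi (n : nat) (F : R -> R) (L : nat) (mu qb : nat -> R)
    (v : nat -> R) (va qa : R) (c : R) : R :=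
  sumL L (fun l => v l * mu l * Phi n F c (qb l)) + va * Phi n F c qa.

Definition Cset (n : nat) (F : R -> R) (L : nat) (mu qb : nat -> R)
    (vbar c : R) : Prop :=
  exists (v : nat -> R) (va qa : R),
    c = Psi n F L mu qb v va qa c /\
    sumL L v + va <= vbar /\
    (forall l, (l < L)%nat -> 0 <= v l) /\
    0 <= va /\ 0 <= qa <= 1.

Definition cost_distribution (F f : R -> R) (clo chi : Rbar) : Prop :=
  Rbar_lt clo chi /\ Rbar_lt (Finite 0) chi /\
  (forall x y, x <= y -> F x <= F y) /\
  is_lim F m_infty 0 /\ is_lim F p_infty 1 /\
  (forall x, continuous F x) /\
  (forall x, Rbar_le (Finite x) clo -> F x = 0) /\
  (forall x, Rbar_le chi (Finite x) -> F x = 1) /\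
  (forall x y, Rbar_le clo (Finite x) -> Rbar_le (Finite y) chi -> x < y -> F x < F y) /\
  (forall x, Rbar_lt clo (Finite x) -> Rbar_lt (Finite x) chi -> is_derive F x (f x)) /\
  (forall x y, Rbar_lt clo (Finite x) -> Rbar_lt (Finite y) chi -> x <= y ->
     F x / f x <= F y / f y).

From Stdlib Require Import Reals Lra Lia.
From Coquelicot Require Import Coquelicot.
Open Scope R_scope.

(* For [n = m+1] agents and [G(x) = geom_compl m x = sum_(j<=m) (1-x)^j], the binomial
   sum defining [Phi] collapses to
   [Phi(c;q) = q G(F(c) q) / (m+1)], i.e. [(1 - (1 - F(c) q)^(m+1)) / ((m+1) F(c))].
   Hence [Phi(c;1)] is continuous, lies in (0,1], is nonincreasing in [c], and dominates
   [Phi(c;q)].  So [c - v Phi(c;1)] is continuous and strictly increasing: it has a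
   unique zero [c_a(v)], increasing in [v], and [c <= v Phi(c;1)] iff [c <= c_a(v)].
   Any [Psi(c)] is at most (total prize) * [Phi(c;1)], while putting the whole budget
   on an artificial bug of complexity 1 attains every [c >= 0] with [c <= v Phi(c;1)];
   hence [C(v) = [0, c_a(v)]]. *)

Definition geom_compl (m : nat) (x : R) : R := sum_f_R0 (fun j => (1 - x) ^ j) m.

Lemma geom_compl_0 m : geom_compl m 0 = INR (S m).
Proof.
induction m as [|m IHm]; unfold geom_compl in *; [simpl; lra|].
rewrite tech5, IHm, Rminus_0_r, pow1, (S_INR (S m)); ring.
Qed.

Lemma mul_geom_compl m x : x * geom_compl m x = 1 - (1 - x) ^ S m.
Proof.
induction m as [|m IHm]; unfold geom_compl in *; [simpl; ring|].
rewrite tech5, Rmult_plus_distr_l, IHm; simpl; ring.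
Qed.

Lemma geom_compl_bounds m x : 0 <= x <= 1 -> 1 <= geom_compl m x <= INR (S m).
Proof.
intros Hx; induction m as [|m IHm]; unfold geom_compl in *; [simpl; lra|].
rewrite tech5, (S_INR (S m)).
assert (0 <= (1 - x) ^ S m <= 1).
{ split; [apply pow_le; lra|].
  rewrite <- (pow1 (S m)) at 2; apply pow_incr; lra. }
lra.
Qed.

Lemma geom_compl_antimono m x y : 0 <= x <= y -> y <= 1 -> geom_compl m y <= geom_compl m x.
Proof.
intros Hxy Hy; induction m as [|m IHm]; unfold geom_compl in *; [simpl; lra|].
rewrite !tech5.
assert ((1 - y) ^ S m <= (1 - x) ^ S m) by (apply pow_incr; lra).
lra.
Qed.

Lemma continuous_geom_compl m x : continuous (geom_compl m) x.
Proof.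
induction m as [|m IHm]; unfold geom_compl in *; [apply continuous_const|].
apply (continuous_ext (fun y => plus (sum_f_R0 (fun j => (1 - y) ^ j) m) ((1 - y) ^ S m))).
{ intros y; symmetry; apply tech5. }
apply (continuous_plus (fun y => sum_f_R0 (fun j => (1 - y) ^ j) m)); [exact IHm|].
apply ex_derive_continuous; auto_derive; trivial.
Qed.

(* From [x G(x) = 1 - (1-x)^(m+1)], since [1 - (1-t)^(m+1)] is nondecreasing in [t]. *)
Lemma mul_geom_compl_scale_le m x q :
  0 <= x <= 1 -> 0 <= q <= 1 -> q * geom_compl m (x * q) <= geom_compl m x.
Proof.
intros Hx Hq.
assert (HG := geom_compl_bounds m x Hx).
destruct (Req_dec x 0) as [->|Hx0].
{ rewrite Rmult_0_l; nra. }
apply (Rmult_le_reg_l x); [lra|].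
replace (x * (q * geom_compl m (x * q))) with (x * q * geom_compl m (x * q)) by ring.
rewrite !mul_geom_compl.
assert ((1 - x) ^ S m <= (1 - x * q) ^ S m) by (apply pow_incr; nra).
lra.
Qed.

Lemma binomial_div_succ m k : (k <= m)%nat ->
  Binomial.C m k / INR (S k) = Binomial.C (S m) (S k) / INR (S m).
Proof.
intros Hk; unfold Binomial.C.
replace (S m - S k)%nat with (m - k)%nat by lia.
change (Factorial.fact (S m)) with (S m * Factorial.fact m)%nat.
change (Factorial.fact (S k)) with (S k * Factorial.fact k)%nat.
rewrite !mult_INR.
assert (INR (Factorial.fact m) <> 0) by apply INR_fact_neq_0.
assert (INR (Factorial.fact k) <> 0) by apply INR_fact_neq_0.
assert (INR (Factorial.fact (m - k)) <> 0) by apply INR_fact_neq_0.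
assert (INR (S m) <> 0) by (apply not_0_INR; lia).
assert (INR (S k) <> 0) by (apply not_0_INR; lia).
field; auto.
Qed.

(* The binomial expansion of [(x + (1-x))^(m+1)] with its [k = 0] term removed. *)
Lemma sum_binomial_succ m x :
  sum_f_R0 (fun k => Binomial.C (S m) (S k) * x ^ k * (1 - x) ^ (m - k)) m = geom_compl m x.
Proof.
destruct (Req_dec x 0) as [->|Hx].
- rewrite geom_compl_0.
  destruct m as [|m]; [simpl; unfold Binomial.C; simpl; field|].
  rewrite decomp_sum by lia; simpl Init.Nat.pred.
  rewrite sum_eq_R0 by (intros k _; simpl; ring).
  rewrite Rminus_0_r, pow1; simpl pow.
  unfold Binomial.C; replace (S (S m) - 1)%nat with (S m) by lia.
  change (Factorial.fact (S (S m))) with (S (S m) * Factorial.fact (S m))%nat.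
  rewrite mult_INR; simpl (Factorial.fact 1); rewrite Rmult_1_l.
  assert (INR (Factorial.fact (S m)) <> 0) by apply INR_fact_neq_0.
  field; auto.
- apply (Rmult_eq_reg_l x); [|exact Hx].
  rewrite mul_geom_compl, scal_sum.
  assert (Hb := binomial x (1 - x) (S m)).
  replace (x + (1 - x)) with 1 in Hb by ring.
  rewrite pow1, decomp_sum in Hb by lia; simpl Init.Nat.pred in Hb.
  rewrite C_n_0 in Hb.
  rewrite (sum_eq _ (fun k => Binomial.C (S m) (S k) * x ^ S k * (1 - x) ^ (S m - S k)))
    by (intros k _; simpl; ring).
  simpl in Hb |- *; lra.
Qed.

Lemma Phi_closed m F c q : Phi (S m) F c q = q / INR (S m) * geom_compl m (F c * q).
Proof.
unfold Phi; replace (S m - 1)%nat with m by lia.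
rewrite <- sum_binomial_succ, scal_sum.
apply sum_eq; intros k Hk.
rewrite Nat.add_1_r.
transitivity (q * (Binomial.C m k / INR (S k)) * (F c * q) ^ k * (1 - F c * q) ^ (m - k));
  [unfold Rdiv; ring|].
rewrite binomial_div_succ by exact Hk; unfold Rdiv; ring.
Qed.

Section WinProbability.

Variables (m : nat) (F : R -> R).
Hypothesis F_range : forall x, 0 <= F x <= 1.

Lemma Phi1_pos c : 0 < Phi (S m) F c 1.
Proof.
rewrite Phi_closed, Rmult_1_r.
assert (HG := geom_compl_bounds m (F c) (F_range c)).
apply Rmult_lt_0_compat; [apply Rdiv_lt_0_compat; [lra|apply lt_0_INR; lia]|lra].
Qed.

Lemma Phi1_le1 c : Phi (S m) F c 1 <= 1.
Proof.
rewrite Phi_closed, Rmult_1_r.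
assert (HG := geom_compl_bounds m (F c) (F_range c)).
assert (0 < INR (S m)) by (apply lt_0_INR; lia).
apply (Rmult_le_reg_l (INR (S m))); [lra|].
unfold Rdiv; rewrite Rmult_1_l, <- Rmult_assoc, Rinv_r by lra; lra.
Qed.

Lemma Phi_le_Phi1 c q : 0 <= q <= 1 -> 0 <= Phi (S m) F c q <= Phi (S m) F c 1.
Proof.
intros Hq; rewrite !Phi_closed, (Rmult_1_r (F c)).
assert (Hm : 0 < / INR (S m)) by (apply Rinv_0_lt_compat, lt_0_INR; lia).
assert (HG := geom_compl_bounds m (F c * q) ltac:(pose proof (F_range c); nra)).
assert (Hscale := mul_geom_compl_scale_le m (F c) q (F_range c) Hq).
replace (q / INR (S m) * geom_compl m (F c * q))
  with (/ INR (S m) * (q * geom_compl m (F c * q))) by (unfold Rdiv; ring).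
replace (1 / INR (S m)) with (/ INR (S m)) by (unfold Rdiv; ring).
split; [apply Rmult_le_pos; nra|apply Rmult_le_compat_l; lra].
Qed.

Hypothesis F_mono : forall x y, x <= y -> F x <= F y.

Lemma Phi1_antimono x y : x <= y -> Phi (S m) F y 1 <= Phi (S m) F x 1.
Proof.
intros Hxy; rewrite !Phi_closed, !Rmult_1_r.
apply Rmult_le_compat_l; [apply Rdiv_le_0_compat; [lra|apply lt_0_INR; lia]|].
apply geom_compl_antimono; [split; [apply F_range|apply F_mono, Hxy]|apply F_range].
Qed.

Hypothesis F_cont : forall x, continuous F x.

Lemma continuous_Phi1 x : continuous (fun c => Phi (S m) F c 1) x.
Proof.
apply (continuous_ext (fun c => scal (1 / INR (S m)) (geom_compl m (F c)))).
{ intros c; rewrite Phi_closed, Rmult_1_r; reflexivity. }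
apply (continuous_scal_r _ (fun c => geom_compl m (F c))).
apply (continuous_comp F (geom_compl m)); [apply F_cont|].
apply continuous_geom_compl.
Qed.

End WinProbability.

Section FixedPoint.

Variable h : R -> R.
Hypothesis h_pos : forall c, 0 < h c.
Hypothesis h_le1 : forall c, h c <= 1.
Hypothesis h_antimono : forall x y, x <= y -> h y <= h x.
Hypothesis h_cont : forall x, continuous h x.

(* [c - v h(c)] is negative at [-|v|-1] and positive at [|v|+1]. *)
Lemma fixpoint_sig (v : R) : {c | c = v * h c}.
Proof.
assert (Hbound : forall c, - Rabs v <= v * h c <= Rabs v).
{ intros c; pose proof (h_pos c); pose proof (h_le1 c).
  destruct (Rle_dec 0 v); [rewrite Rabs_pos_eq by lra|rewrite Rabs_left by lra]; split; nra. }
assert (Hcont : continuity (fun c => c - v * h c)).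
{ intros x; apply continuity_pt_minus; [apply continuity_pt_id|].
  apply continuity_pt_scal, continuity_pt_filterlim, h_cont. }
destruct (IVT _ (- Rabs v - 1) (Rabs v + 1) Hcont) as [c [_ Hc]].
- pose proof (Rabs_pos v); lra.
- pose proof (Hbound (- Rabs v - 1)); lra.
- pose proof (Hbound (Rabs v + 1)); lra.
- exists c; lra.
Qed.

Definition fixpoint (v : R) : R := proj1_sig (fixpoint_sig v).

Lemma fixpointE v : fixpoint v = v * h (fixpoint v).
Proof. exact (proj2_sig (fixpoint_sig v)). Qed.

Lemma fixgap_lt v x y : 0 <= v -> x < y -> x - v * h x < y - v * h y.
Proof. intros Hv Hxy; pose proof (h_antimono x y (Rlt_le _ _ Hxy)); nra. Qed.

Lemma le_fixpointP v c : 0 <= v -> c <= v * h c <-> c <= fixpoint v.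
Proof.
intros Hv; pose proof (fixpointE v); split; intros Hc.
- destruct (Rle_dec c (fixpoint v)) as [|Hlt]; [assumption|].
  pose proof (fixgap_lt v (fixpoint v) c Hv ltac:(lra)); lra.
- destruct (Rle_lt_or_eq_dec _ _ Hc) as [Hlt|Heq]; [|rewrite Heq; lra].
  pose proof (fixgap_lt v c (fixpoint v) Hv Hlt); lra.
Qed.

Lemma fixpoint_unique v c : 0 <= v -> c = v * h c -> c = fixpoint v.
Proof.
intros Hv Hc; pose proof (fixpointE v).
destruct (Rtotal_order c (fixpoint v)) as [Hlt|[Heq|Hlt]]; [|exact Heq|];
  [pose proof (fixgap_lt v _ _ Hv Hlt)|pose proof (fixgap_lt v _ _ Hv Hlt)]; lra.
Qed.

Lemma fixpoint_lt v1 v2 : 0 <= v1 -> v1 < v2 -> fixpoint v1 < fixpoint v2.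
Proof.
intros Hv1 Hv12.
assert (Hlt : fixpoint v1 < v2 * h (fixpoint v1)).
{ rewrite fixpointE at 1; pose proof (h_pos (fixpoint v1)); nra. }
assert (Hle : fixpoint v1 <= fixpoint v2) by (apply le_fixpointP; lra).
destruct (Rle_lt_or_eq_dec _ _ Hle) as [|Heq]; [assumption|].
rewrite Heq, <- fixpointE in Hlt; lra.
Qed.

End FixedPoint.

Lemma sumL_le L (g g' : nat -> R) :
  (forall l, (l < L)%nat -> g l <= g' l) -> sumL L g <= sumL L g'.
Proof.
induction L as [|L IHL]; simpl; intros Hle; [lra|].
assert (sumL L g <= sumL L g') by (apply IHL; intros l Hl; apply Hle; lia).
pose proof (Hle L (Nat.lt_succ_diag_r L)); lra.
Qed.

Lemma sumL_mulr L (g : nat -> R) a : sumL L (fun l => g l * a) = sumL L g * a.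
Proof. induction L as [|L IHL]; simpl; [ring|rewrite IHL; ring]. Qed.

Lemma sumL_eq0 L (g : nat -> R) : (forall l, g l = 0) -> sumL L g = 0.
Proof. intros Hg; induction L as [|L IHL]; simpl; [reflexivity|rewrite IHL, Hg; ring]. Qed.

Section Implementable.

Variables (m : nat) (F : R -> R) (L : nat) (mu qb : nat -> R).
Hypothesis F_range : forall x, 0 <= F x <= 1.
Hypothesis mu_range : forall l, (l < L)%nat -> 0 <= mu l <= 1.
Hypothesis qb_range : forall l, (l < L)%nat -> 0 <= qb l <= 1.

Lemma Psi_bounds v va qa c :
  (forall l, (l < L)%nat -> 0 <= v l) -> 0 <= va -> 0 <= qa <= 1 ->
  0 <= Psi (S m) F L mu qb v va qa c <= (sumL L v + va) * Phi (S m) F c 1.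
Proof.
intros Hv Hva Hqa; unfold Psi.
assert (Hterm : forall l, (l < L)%nat ->
          0 <= v l * mu l * Phi (S m) F c (qb l) <= v l * Phi (S m) F c 1).
{ intros l Hl.
  pose proof (Phi_le_Phi1 m F F_range c (qb l) (qb_range l Hl)).
  pose proof (mu_range l Hl); pose proof (Hv l Hl).
  assert (0 <= v l * mu l <= v l) by nra.
  split; nra. }
assert (0 <= sumL L (fun l => v l * mu l * Phi (S m) F c (qb l))).
{ rewrite <- (sumL_eq0 L (fun _ => 0)) by reflexivity; apply sumL_le; intros l Hl; apply Hterm, Hl. }
assert (sumL L (fun l => v l * mu l * Phi (S m) F c (qb l)) <= sumL L v * Phi (S m) F c 1).
{ rewrite <- sumL_mulr; apply sumL_le; intros l Hl; apply Hterm, Hl. }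
pose proof (Phi_le_Phi1 m F F_range c qa Hqa).
split; nra.
Qed.

Lemma Cset_iff vbar c :
  Cset (S m) F L mu qb vbar c <-> 0 <= c <= vbar * Phi (S m) F c 1.
Proof.
pose proof (Phi1_pos m F F_range c) as HP.
split.
- intros (v & va & qa & Hc & Hbudget & Hv & Hva & Hqa).
  pose proof (Psi_bounds v va qa c Hv Hva Hqa).
  split; nra.
- intros Hc.
  exists (fun _ => 0), (c / Phi (S m) F c 1), 1.
  unfold Psi; rewrite !sumL_eq0 by (intros; ring).
  repeat split; try lra.
  + field; lra.
  + rewrite Rplus_0_l; apply Rle_div_l; lra.
  + intros; lra.
  + apply Rdiv_le_0_compat; lra.
Qed.

End Implementable.

Lemma cost_distribution_range F f clo chi :
  cost_distribution F f clo chi -> forall x, 0 <= F x <= 1.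
Proof.
intros (_ & _ & Hmono & Hlim0 & Hlim1 & _) x; split.
- apply (is_lim_le_loc F (fun _ => F x) m_infty 0 (F x)); [|exact Hlim0|apply is_lim_const].
  exists x; intros y Hy; apply Hmono; lra.
- apply (is_lim_le_loc (fun _ => F x) F p_infty (F x) 1); [|apply is_lim_const|exact Hlim1].
  exists x; intros y Hy; apply Hmono; lra.
Qed.

Theorem lemma4 (n : nat) (F f : R -> R) (clo chi : Rbar)
  (L : nat) (mu qb : nat -> R) :
  (1 <= n)%nat ->
  cost_distribution F f clo chi ->
  (forall l, (l < L)%nat -> 0 < mu l <= 1) ->
  (forall l, (l < L)%nat -> 0 < qb l <= 1) ->
  exists ca : R -> R,
    (* ca vbar is the unique fixed point of c |-> vbar * Phi(c;1) *)
    (forall vbar, 0 < vbar ->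
       ca vbar = vbar * Phi n F (ca vbar) 1 /\
       (forall c, c = vbar * Phi n F c 1 -> c = ca vbar)) /\
    (* ca increases in vbar *)
    (forall v1 v2, 0 < v1 -> v1 < v2 -> ca v1 < ca v2) /\
    (* C(vbar) = [0, ca vbar] *)
    (forall vbar, 0 < vbar ->
       forall c, Cset n F L mu qb vbar c <-> 0 <= c <= ca vbar).
Proof.
intros Hn HF Hmu Hqb.
destruct n as [|m]; [lia|].
pose proof (cost_distribution_range F f clo chi HF) as F_range.
destruct HF as (_ & _ & F_mono & _ & _ & F_cont & _).
set (h := fun c => Phi (S m) F c 1).
pose proof (Phi1_pos m F F_range : forall c, 0 < h c) as h_pos.
pose proof (Phi1_le1 m F F_range : forall c, h c <= 1) as h_le1.
pose proof (Phi1_antimono m F F_range F_mono : forall x y, x <= y -> h y <= h x) as h_antimono.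
pose proof (continuous_Phi1 m F F_cont : forall x, continuous h x) as h_cont.
exists (fixpoint h h_pos h_le1 h_cont).
split; [|split].
- intros vbar Hv; split; [apply fixpointE|].
  intros c Hc; apply (fixpoint_unique h h_pos h_le1 h_antimono h_cont); [lra|exact Hc].
- intros v1 v2 Hv1; apply (fixpoint_lt h h_pos h_le1 h_antimono h_cont); lra.
- intros vbar Hv c.
  rewrite Cset_iff, <- (le_fixpointP h h_pos h_le1 h_antimono h_cont); [reflexivity|lra|exact F_range|..];
    intros l Hl; [specialize (Hmu l Hl)|specialize (Hqb l Hl)]; lra.
Qed.
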